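(* Let $U,V\in\mathbb{R}_{\max}^{m\times n}$, $b,d\in\mathbb{R}_{\max}^m$, $p\in\mathbb{R}_{\max}^n$, $q\in(\mathbb{R}\cup\{+\infty\})^n$, and let $A$ and $B(\lambda)$ be the $(m+n+1)\times(n+1)$ matrices $$A=\begin{pmatrix} U & b\\ -\infty & p\\ q^- & -\infty\end{pmatrix},\qquad B(\lambda)=\begin{pmatrix} V & d\\ \lambda\otimes I & -\infty\\ -\infty & \lambda\end{pmatrix},\qquad \lambda\in\mathbb{R}.$$ Let $\mathcal{S}$ be the set of positional strategies of player Max and $\mathcal{T}$ the set of positional strategies of player Min. Then for every $\lambda\in\mathbb{R}$, $$\min_{\tau\in\mathcal{T}}\Phi_\tau(\lambda)=\Phi(\lambda)=\max_{\sigma\in\mathcal{S}}\Phi^{\sigma}(\lambda).$$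
   Context: Max-plus notation: $\mathbb{R}_{\max}=\mathbb{R}\cup\{-\infty\}$ with $a\oplus b=\max(a,b)$, $a\otimes b=a+b$, extended to matrices by $(A\oplus B)_{ij}=a_{ij}\oplus b_{ij}$ and $(A\otimes B)_{ij}=\max_k(a_{ik}+b_{kj})$. $I$ is the identity matrix (zeros on the diagonal, $-\infty$ off it). The conjugate $a^-$ of $a\in\mathbb{R}\cup\{\pm\infty\}$ is $-a$ if $a\in\mathbb{R}$, $+\infty$ if $a=-\infty$, $-\infty$ if $a=+\infty$; for a column vector $q$, $q^-$ is the row vector $(q_i^-)$. In $A$, the block ''$-\infty$'' in the second block row is the $n\times n$ all-$(-\infty)$ matrix, the last row is $(q^-,\,-\infty)$; in $B(\lambda)$, $\lambda\otimes I$ is the $n\times n$ matrix with $\lambda$ on the diagonal and $-\infty$ elsewhere, and the last row is $(-\infty,\dots,-\infty,\lambda)$. For matrices $A=(a_{ij}),B=(b_{ij})$ over $\mathbb{R}_{\max}$ of size $M\times N$, $A^{\sharp}B$ denotes the min-max map $f:\mathbb{R}^N\to\mathbb{R}^N$, $f_j(x)=\min_{k:\,a_{kj}\neq-\infty}\big(-a_{kj}+\max_{l:\,b_{kl}\neq -\infty}(b_{kl}+x_l)\big)$, and its cycle-time vector is $\chi(A^\sharp B)=\lim_{k\to\infty} f^k(0)/k$ (which exists). Standing assumption (needed for these objects to be defined): every column of $A$ and every row of $B(\lambda)$ contains a finite entry. A positional strategy of Max is a map $\sigma:\{1,\dots,m+n+1\}\to\{1,\dots,n+1\}$ with $B(\lambda)_{i\sigma(i)}\neq-\infty$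 for all $i$; a positional strategy of Min is a map $\tau:\{1,\dots,n+1\}\to\{1,\dots,m+n+1\}$ with $a_{\tau(j)j}\neq-\infty$ for all $j$. Define $A_\tau$ by $(A_\tau)_{ij}=a_{ij}$ if $i=\tau(j)$ and $-\infty$ otherwise, and $B^\sigma(\lambda)$ by $(B^\sigma(\lambda))_{ij}=B(\lambda)_{ij}$ if $j=\sigma(i)$ and $-\infty$ otherwise. Then $\Phi(\lambda)=\min_i\chi_i(A^\sharp B(\lambda))$, $\Phi_\tau(\lambda)=\min_i\chi_i(A_\tau^\sharp B(\lambda))$, $\Phi^\sigma(\lambda)=\min_i\chi_i(A^\sharp B^\sigma(\lambda))$. *)

From HB Require Import structures.
From mathcomp Require Import all_boot all_order all_algebra.
From mathcomp Require Import all_classical all_reals all_analysis.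
Set Implicit Arguments. Unset Strict Implicit. Unset Printing Implicit Defensive.
Import Order.TTheory GRing.Theory Num.Theory numFieldNormedType.Exports.
Local Open Scope ring_scope.
Local Open Scope ereal_scope.

(* Max-plus scalars are represented in \bar R; -oo is the max-plus zero.
   Entries of R_max are those different from +oo. *)

Section MinMax.
Variable R : realType.

(* Under the standing assumption the value is a real number; [fine]
   converts it back to R. *)
Definition minmax (I J : finType) (A B : I -> J -> \bar R) (x : J -> R)
  (j : J) : R :=
  fine (\big[mine/+oo]_(k | A k j != -oo)
          (- A k j + \big[maxe/-oo]_(l | B k l != -oo) (B k l + (x l)%:E))).

Definition mm_orbit (I J : finType) (A B : I -> J -> \bar R) (k : nat) : J -> R :=
  iter k (minmax A B) (fun _ => 0%R).

Definition cycle_time (I J : finType) (A B : I -> J -> \bar R) (j : J) : R :=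
  limn (fun k : nat => (mm_orbit A B k j / k%:R)%R).

Definition Phi (I J : finType) (A B : I -> J -> \bar R) : \bar R :=
  \big[mine/+oo]_(j : J) (cycle_time A B j)%:E.

Definition is_max_strategy (I J : finType) (B : I -> J -> \bar R)
  (s : {ffun I -> J}) : bool := [forall i, B i (s i) != -oo].
Definition is_min_strategy (I J : finType) (A : I -> J -> \bar R)
  (t : {ffun J -> I}) : bool := [forall j, A (t j) j != -oo].

Definition restr_min (I J : finType) (A : I -> J -> \bar R) (t : {ffun J -> I})
  : I -> J -> \bar R := fun i j => if i == t j then A i j else -oo.
Definition restr_max (I J : finType) (B : I -> J -> \bar R) (s : {ffun I -> J})
  : I -> J -> \bar R := fun i j => if j == s i then B i j else -oo.

(* Block matrices.  Rows of size m+n+1 are indexed by ('I_m + 'I_n) + unit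
   (first block row, second block row, last row); columns of size n+1 by
   'I_n + unit (first n columns, last column). *)
Definition Amat (m n : nat) (U : 'I_m -> 'I_n -> \bar R) (b : 'I_m -> \bar R)
  (p : 'I_n -> \bar R) (q : 'I_n -> \bar R) :
  ('I_m + 'I_n + unit)%type -> ('I_n + unit)%type -> \bar R :=
  fun i j =>
    match i, j with
    | inl (inl k), inl l => U k l
    | inl (inl k), inr _ => b k
    | inl (inr _), inl _ => -oo
    | inl (inr k), inr _ => p k
    | inr _, inl l => - q l
    | inr _, inr _ => -oo
    end.

Definition Bmat (m n : nat) (V : 'I_m -> 'I_n -> \bar R) (d : 'I_m -> \bar R)
  (lam : R) : ('I_m + 'I_n + unit)%type -> ('I_n + unit)%type -> \bar R :=
  fun i j =>
    match i, j with
    | inl (inl k), inl l => V k l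
    | inl (inl k), inr _ => d k
    | inl (inr k), inl l => if k == l then lam%:E else -oo
    | inl (inr _), inr _ => -oo
    | inr _, inl _ => -oo
    | inr _, inr _ => lam%:E
    end.

End MinMax.

From HB Require Import structures.
From mathcomp Require Import all_boot all_order all_algebra.
From mathcomp Require Import all_classical all_reals all_analysis.
From mathcomp Require Import ring lra.
Set Implicit Arguments. Unset Strict Implicit. Unset Printing Implicit Defensive.
Import Order.TTheory GRing.Theory Num.Theory numFieldNormedType.Exports.
Local Open Scope ring_scope.

(* The matrices define a deterministic mean-payoff game on the bipartite
   graph of columns (Min nodes) and rows (Max nodes).  Two rounds of its
   Shapley operator F give one application of A^# B on the columns, so
   chi(A^# B) = 2 eta as soon as F^N 0 = N eta + O(1).
   For a discount factor a < 1 the operator y |-> F (a y) has a fixed point,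
   and the positional strategies attaining it are optimal among positional
   strategies up to O(1 - a), as one sees by comparing the fixed point with
   the mean weight and the bias of the cycle that each strategy reaches.
   Since there are finitely many positional strategies, some pair of them is
   an exact saddle point of the mean weights.  Against a fixed positional
   strategy of one player, a walk of length N splits into a short path and
   cycles whose mean weights are bounded by the saddle value, which yields
   F^N 0 = N eta + O(1).  Restricting Min to a positional strategy can only
   increase chi and restricting Max can only decrease it, with equality at
   the saddle point. *)

Lemma fin_bounded (R : realDomainType) (T : finType) (f : T -> R) :
  exists2 M : R, 0 <= M & forall a, `|f a| <= M.
Proof.
exists (\big[Num.max/0]_a `|f a|); first exact: bigmax_ge_id.
by move=> a; exact: (le_bigmax _ (fun a => `|f a|) a).
Qed.

Lemma pigeonhole_repeat (X : finType) (x : nat -> X) :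
  exists i j, (i < j <= #|X|)%N /\ x i = x j.
Proof.
have [/existsP[i /existsP[j /andP[ij /eqP xij]]]|] :=
  boolP [exists i : 'I_#|X|.+1, exists j : 'I_#|X|.+1, (i < j)%N && (x i == x j)].
  by exists i, j; rewrite ij -ltnS ltn_ord.
move=> /negP noxij; have inj : injective (fun k : 'I_#|X|.+1 => x k).
  move=> a b xab; apply/val_inj/eqP; case: ltngtP => // ab; case: noxij.
    by apply/existsP; exists a; apply/existsP; exists b; rewrite ab xab eqxx.
  by apply/existsP; exists b; apply/existsP; exists a; rewrite ab xab eqxx.
by have := leq_card _ inj; rewrite card_ord ltnn.
Qed.

Lemma natmul_bounded_le0 (R : realType) (d C : R) :
  (forall M : nat, M%:R * d <= C) -> d <= 0.
Proof.
move=> bounded; rewrite leNgt; apply/negP => d0.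
have C0 : 0 <= C by have := bounded 0%N; rewrite mul0r.
have := bounded (Num.bound (C / d)); rewrite -ler_pdivlMr // leNgt.
by rewrite archi_boundP // divr_ge0 // ltW.
Qed.

Lemma limn_div_linear (R : realType) (a : nat -> R) (c K : R) :
  (forall N, `|a N - N%:R * c| <= K) -> limn (fun N => a N / N%:R) = c.
Proof.
move=> a_lin; apply: cvg_lim; first exact: Rhausdorff.
apply/cvgrPdist_le => e e0; near=> N.
have N0 : 0 < N%:R :> R by rewrite ltr0n; near: N; exact: nbhs_infty_gt.
have -> : c - a N / N%:R = - (a N - N%:R * c) / N%:R by field; rewrite gt_eqF.
rewrite normrM normrN normfV normr_nat ler_pdivrMr // (le_trans (a_lin N)) //.
by rewrite -ler_pdivrMl // mulrC; near: N; exact: nbhs_infty_ger.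
Unshelve. all: by end_near.
Qed.

Lemma slope_le (R : realType) (a : nat -> R) (e1 e2 K1 K2 : R) :
  (forall N, N%:R * e1 - K1 <= a N) -> (forall N, a N <= N%:R * e2 + K2) -> e1 <= e2.
Proof.
move=> a_ge a_le; rewrite -subr_le0; apply: (@natmul_bounded_le0 _ _ (K1 + K2)) => N.
by have := a_ge N; have := a_le N; rewrite mulrBr; lra.
Qed.

Lemma bigmine_attained (R : realType) (K : finType) (P : pred K) (f : K -> R) k0 : P k0 ->
  exists2 k, P k & (\big[mine/+oo]_(k | P k) (f k)%:E = (f k)%:E)%E.
Proof.
move=> Pk0; have [k Pk ->] :=
  @eq_bigmin _ _ K +oo%E k0 P (fun k => (f k)%:E) Pk0 (fun _ _ => leey _).
by exists k.
Qed.

Lemma bigmaxe_attained (R : realType) (K : finType) (P : pred K) (f : K -> R) k0 : P k0 ->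
  exists2 k, P k & (\big[maxe/-oo]_(k | P k) (f k)%:E = (f k)%:E)%E.
Proof.
move=> Pk0; have [k Pk ->] :=
  @eq_bigmax _ _ K -oo%E k0 P (fun k => (f k)%:E) Pk0 (fun _ _ => leNye _).
by exists k.
Qed.

Section PositionalMean.
Variables (R : realType) (X : finType).
Implicit Types (s : X -> X) (w : X -> X -> R).

Definition path_weight w s L v : R :=
  \sum_(0 <= i < L) w (iter i s v) (iter i.+1 s v).

(* The orbit of v under s enters a cycle after at most #|X| steps, and the
   length of that cycle divides [period]. *)
Let period := ((#|X|)`!)%N.

Definition mean_weight w s v : R :=
  path_weight w s period (iter #|X| s v) / period%:R.

(* Averaging over a whole period makes [edge_weight_mean_bias] exact. *)
Definition bias w s v : R :=
  (\sum_(0 <= i < period) (path_weight w s (#|X| + i)%N v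
                           - (#|X| + i)%N%:R * mean_weight w s v)) / period%:R.

Lemma period_neq0 : (period%:R : R) != 0.
Proof. by rewrite pnatr_eq0 -lt0n fact_gt0. Qed.

Lemma iter_period s v : iter (#|X| + period)%N s v = iter #|X| s v.
Proof.
have [i [j [/andP[ij jX] eij]]] := pigeonhole_repeat (fun k => iter k s v).
have iX : (i <= #|X|)%N := leq_trans (ltnW ij) jX.
have iter_cycle k : iter (i + k * (j - i))%N s v = iter i s v.
  elim: k => [|k IH]; first by rewrite addn0.
  by rewrite mulSn addnCA iterD IH -iterD subnK ?(ltnW ij).
have dvd : (j - i %| period)%N.
  by apply: dvdn_fact; rewrite subn_gt0 ij (leq_trans (leq_subr _ _) jX).
by rewrite -(subnK iX) -addnA -(divnK dvd) iterD iter_cycle -iterD.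
Qed.

Lemma path_weight0 w s v : path_weight w s 0 v = 0.
Proof. by rewrite /path_weight big_geq. Qed.

Lemma path_weightSr w s L v :
  path_weight w s L.+1 v = path_weight w s L v + w (iter L s v) (iter L.+1 s v).
Proof. by rewrite /path_weight big_nat_recr. Qed.

Lemma path_weightSl w s L v :
  path_weight w s L.+1 v = w v (s v) + path_weight w s L (s v).
Proof.
rewrite /path_weight big_nat_recl //=; congr (_ + _).
by apply: eq_bigr => i _; rewrite -!iterSr.
Qed.

Lemma path_weight_iter w s L v : path_weight w s L (iter #|X| s v) =
  \sum_(0 <= i < L) w (iter (#|X| + i)%N s v) (iter (#|X| + i)%N.+1 s v).
Proof.
rewrite /path_weight; apply: eq_bigr => i _.
by rewrite -!iterD !(addnC _ #|X|) addnS.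
Qed.

Lemma mean_weight_step w s v : mean_weight w s (s v) = mean_weight w s v.
Proof.
rewrite /mean_weight -iterSr iterS; congr (_ / _).
set z := iter #|X| s v.
have zper : iter period s z = z by rewrite /z -iterD addnC iter_period.
by have := path_weightSl w s period z; rewrite path_weightSr iterS zper; lra.
Qed.

Lemma mean_weight_iter w s L v : mean_weight w s (iter L s v) = mean_weight w s v.
Proof. by elim: L => //= L IH; rewrite mean_weight_step. Qed.

Lemma edge_weight_mean_bias w s v :
  w v (s v) = mean_weight w s v + bias w s v - bias w s (s v).
Proof.
have shift i : path_weight w s (#|X| + i)%N (s v) = path_weight w s (#|X| + i)%N v
    + w (iter (#|X| + i)%N s v) (iter (#|X| + i)%N.+1 s v) - w v (s v).
  by rewrite -path_weightSr path_weightSl addrC addKr.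
have mean_sum : \sum_(0 <= i < period)
    w (iter (#|X| + i)%N s v) (iter (#|X| + i)%N.+1 s v) = mean_weight w s v * period%:R.
  by rewrite -path_weight_iter /mean_weight divfK ?period_neq0.
suff -> : bias w s (s v) = bias w s v + mean_weight w s v - w v (s v) by lra.
rewrite /bias mean_weight_step (eq_bigr (fun i => (path_weight w s (#|X| + i)%N v
    - (#|X| + i)%N%:R * mean_weight w s v)
    + w (iter (#|X| + i)%N s v) (iter (#|X| + i)%N.+1 s v) - w v (s v))); last first.
  by move=> i _; rewrite shift; lra.
rewrite !big_split /= mean_sum sumr_const_nat subn0 -mulr_natl.
by field; rewrite period_neq0.
Qed.

Lemma path_weight_mean_bias w s L v :
  path_weight w s L v = L%:R * mean_weight w s v + bias w s v - bias w s (iter L s v).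
Proof.
elim: L => [|L IH]; first by rewrite path_weight0 mul0r add0r subrr.
rewrite path_weightSr IH iterS edge_weight_mean_bias mean_weight_iter -iterS mulrSr.
lra.
Qed.

Lemma path_weight_opp w s L v :
  path_weight (fun a b => - w a b) s L v = - path_weight w s L v.
Proof. by rewrite /path_weight sumrN. Qed.

Lemma mean_weight_opp w s v :
  mean_weight (fun a b => - w a b) s v = - mean_weight w s v.
Proof. by rewrite /mean_weight path_weight_opp mulNr. Qed.

Lemma bias_opp w s v : bias (fun a b => - w a b) s v = - bias w s v.
Proof.
rewrite /bias -mulNr -sumrN; congr (_ / _); apply: eq_bigr => i _.
by rewrite path_weight_opp mean_weight_opp; lra.
Qed.

End PositionalMean.

Section Walks.
Variables (R : realType) (X : finType) (adj : rel X).
Implicit Types (x : nat -> X) (s : X -> X) (w : X -> X -> R).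

Definition walk x N := forall t, (t < N)%N -> adj (x t) (x t.+1).

Definition walk_weight w x N : R := \sum_(0 <= t < N) w (x t) (x t.+1).

Definition positional_strategy s := [forall v, adj v (s v)].

Lemma iter_walk_weight w (F : (X -> R) -> X -> R) :
  (forall y v, exists2 u, adj v u & F y v = w v u + y u) ->
  forall N v, exists x, [/\ x 0%N = v, walk x N &
    iter N F (fun _ => 0) v = walk_weight w x N].
Proof.
move=> F_attained; elim=> [|N IH] v.
  by exists (fun _ => v); split => //; rewrite /walk_weight big_geq.
rewrite iterS; have [u vu ->] := F_attained (iter N F (fun _ => 0)) v.
have [x [x0 xN ->]] := IH u.
exists (fun t => if t is t'.+1 then x t' else v); split => //.
  by case=> [|t] /= ht; [rewrite x0 | apply: xN].
by rewrite /walk_weight big_nat_recl //= x0.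
Qed.

Lemma first_repeat x : exists p q, [/\ (p < q <= #|X|)%N, x p = x q &
  forall i j, (i < j < q)%N -> x i != x j].
Proof.
have repeat_ex : exists q, [exists i : 'I_q, x i == x q] && (q <= #|X|)%N.
  have [i [j [/andP[ij jX] xij]]] := pigeonhole_repeat x.
  by exists j; rewrite jX andbT; apply/existsP; exists (Ordinal ij); rewrite xij.
case: (ex_minnP repeat_ex) => q /andP[/existsP[[p pq] /eqP /= xpq] qX] q_min.
exists p, q; split; rewrite ?pq //= => i j /andP[ij jq]; apply/eqP => xij.
have := q_min j; rewrite (leq_trans (ltnW jq) qX) andbT.
by case: existsP => [_ /(_ isT)|[]]; [rewrite leqNgt jq | exists (Ordinal ij); rewrite xij].
Qed.

Lemma strategy_along_walk x q : (forall v, exists u, adj v u) -> walk x q ->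
  (forall i j, (i < j < q)%N -> x i != x j) ->
  exists2 s, positional_strategy s & forall t, (t < q)%N -> s (x t) = x t.+1.
Proof.
move=> /fin_all_exists[succ succP] xq x_inj.
pose s v := if [pick t : 'I_q | x t == v] is Some t then x t.+1 else succ v.
exists s => [|t tq]; rewrite /s.
  by apply/forallP => v; case: pickP => [t /eqP <-|_]; [exact: xq | exact: succP].
case: pickP => [t' /eqP xt't|/(_ (Ordinal tq))]; last by rewrite eqxx.
suff -> : nat_of_ord t' = t by [].
case: (ltngtP t' t) => // lt.
  by move: (x_inj t' t); rewrite lt tq xt't eqxx => /(_ isT).
by move: (x_inj t t'); rewrite lt ltn_ord xt't eqxx => /(_ isT).
Qed.

Lemma iter_along_walk s x q t i : (forall j, (j < q)%N -> s (x j) = x j.+1) ->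
  (t + i <= q)%N -> iter i s (x t) = x (t + i)%N.
Proof.
move=> sx; elim: i => [|i IH] tiq; first by rewrite addn0.
have ti_lt : (t + i < q)%N by rewrite -addnS.
by rewrite iterS IH ?sx ?addnS //; exact: ltnW.
Qed.

Lemma path_weight_along_walk w s x q t L :
  (forall j, (j < q)%N -> s (x j) = x j.+1) -> (t + L <= q)%N ->
  path_weight w s L (x t) = \sum_(t <= i < (t + L)%N) w (x i) (x i.+1).
Proof.
move=> sx tLq; rewrite /path_weight -[in RHS](add0n t) big_addn add0n addKn.
apply: eq_big_nat => i /andP[_ iL].
have ti1 : (t + i.+1 <= q)%N by rewrite (leq_trans _ tLq) // leq_add2l.
have ti : (t + i <= q)%N by rewrite (leq_trans _ ti1) // leq_add2l.
by rewrite !(iter_along_walk sx) // addnS addnC.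
Qed.

Definition skip_cycle x p L t := if (t <= p)%N then x t else x (t + L)%N.

Lemma walk_skip_cycle x p L N : x p = x (p + L)%N -> (p + L <= N)%N ->
  walk x N -> walk (skip_cycle x p L) (N - L)%N.
Proof.
move=> xpL pLN xN t tNL; rewrite /skip_cycle.
have : (t + L < N)%N by rewrite addnC -ltn_subRL.
case: (ltngtP t p) => [tp|pt|->] tLN.
- by apply: xN; exact: leq_trans tp (leq_trans (leq_addr L p) pLN).
- by rewrite addSn; apply: xN.
- by rewrite xpL addSn; apply: xN.
Qed.

Lemma walk_weight_skip_cycle w x p L N : x p = x (p + L)%N -> (p + L <= N)%N ->
  walk_weight w x N =
  walk_weight w (skip_cycle x p L) (N - L)%N
  + \sum_(p <= t < (p + L)%N) w (x t) (x t.+1).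
Proof.
move=> xpL pLN; have LN : (L <= N)%N := leq_trans (leq_addl p L) pLN.
have pN : (p <= N - L)%N by rewrite leq_subRL // addnC.
have pN' : (p <= N)%N := leq_trans (leq_addr L p) pLN.
rewrite /walk_weight (big_cat_nat (leq0n p) pN) (big_cat_nat (leq0n p) pN').
rewrite (big_cat_nat (leq_addr L p) pLN) /=.
rewrite [X in _ + X]addrC addrA big_addn; congr (_ + _ + _).
  by apply: eq_big_nat => t /andP[_ tp]; rewrite /skip_cycle (ltnW tp) tp.
apply: eq_big_nat => t /andP[pt _]; rewrite /skip_cycle ltnNge pt addSn /=.
case: leqP => // tp; have -> : t = p by apply/eqP; rewrite eqn_leq tp pt.
by rewrite xpL.
Qed.

Lemma walk_weight_opp w x N :
  walk_weight (fun a b => - w a b) x N = - walk_weight w x N.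
Proof. by rewrite /walk_weight sumrN. Qed.

Section WalkBound.
Variables (w : X -> X -> R) (eta : X -> R) (M : R).
Hypothesis adj_total : forall v, exists u, adj v u.
Hypothesis mean_le : forall s, positional_strategy s -> forall v, mean_weight w s v <= eta v.
Hypothesis w_bounded : forall a b, `|w a b| <= M.
Hypothesis eta_bounded : forall v, `|eta v| <= M.

Lemma walk_weight_le_short x N : (N <= #|X|)%N ->
  walk_weight w x N <= N%:R * eta (x 0%N) + #|X|%:R * (M + M).
Proof.
move=> NX; have M0 : 0 <= M := le_trans (normr_ge0 _) (eta_bounded (x 0%N)).
have weight_le : walk_weight w x N <= N%:R * M.
  have -> : N%:R * M = \sum_(0 <= t < N) M by rewrite sumr_const_nat subn0 mulr_natl.
  by apply: ler_sum => t _; apply: le_trans (w_bounded _ _); exact: ler_norm.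
have eta_ge : - (N%:R * M) <= N%:R * eta (x 0%N).
  rewrite -mulrN ler_wpM2l // lerNl.
  by rewrite (le_trans _ (eta_bounded (x 0%N))) // -normrN ler_norm.
have : N%:R * (M + M) <= #|X|%:R * (M + M) by rewrite ler_wpM2r ?addr_ge0 ?ler_nat.
rewrite mulrDr; lra.
Qed.

Lemma walk_weight_le x N : walk x N ->
  walk_weight w x N <= N%:R * eta (x 0%N) + #|X|%:R * (M + M).
Proof.
elim/ltn_ind: N x => N IH x xN.
case: (leqP N #|X|) => [NX|XN]; first exact: walk_weight_le_short.
have [p [q [/andP[pq qX] xpq x_inj]]] := first_repeat x.
have qN : (q < N)%N := leq_ltn_trans qX XN.
have [s s_pos sx] :=
  strategy_along_walk adj_total (fun t tq => xN t (ltn_trans tq qN)) x_inj.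
set L := (q - p)%N; have pLq : (p + L = q)%N by rewrite subnKC // ltnW.
have cycle : \sum_(p <= t < (p + L)%N) w (x t) (x t.+1) = L%:R * mean_weight w s (x 0%N).
  rewrite -(path_weight_along_walk w sx) ?pLq // path_weight_mean_bias.
  rewrite (iter_along_walk sx) ?pLq // -xpq addrK.
  by rewrite -[p]add0n -(iter_along_walk sx) ?add0n ?(ltnW pq) // mean_weight_iter.
have LN : (L <= N)%N by rewrite (leq_trans (leq_subr p q)) // ltnW.
have xpL : x p = x (p + L)%N by rewrite pLq.
have pLN : (p + L <= N)%N by rewrite pLq ltnW.
have NL : (N - L < N)%N by rewrite ltn_subrL subn_gt0 pq (leq_ltn_trans (leq0n q) qN).
have := IH _ NL _ (walk_skip_cycle xpL pLN xN).
rewrite (walk_weight_skip_cycle w xpL pLN) cycle /skip_cycle leq0n (natrB _ LN).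
have : L%:R * mean_weight w s (x 0%N) <= L%:R * eta (x 0%N) by rewrite ler_wpM2l ?mean_le.
lra.
Qed.

End WalkBound.

Lemma walk_weight_bounded w eta : (forall v, exists u, adj v u) ->
  (forall s, positional_strategy s -> forall v, mean_weight w s v <= eta v) ->
  exists K, forall x N, walk x N -> walk_weight w x N <= N%:R * eta (x 0%N) + K.
Proof.
move=> adj_total mean_le.
have [Mw _ w_le] := fin_bounded (fun e : X * X => w e.1 e.2).
have [Me _ eta_le] := fin_bounded eta.
exists (#|X|%:R * (Num.max Mw Me + Num.max Mw Me)) => x N.
apply: walk_weight_le => // [a b|v].
  by rewrite (le_trans (w_le (a, b))) // le_max lexx.
by rewrite (le_trans (eta_le v)) // le_max lexx orbT.
Qed.

Section IterBounds.
Variables (w : X -> X -> R) (eta : X -> R) (F : (X -> R) -> X -> R).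
Hypothesis adj_total : forall v, exists u, adj v u.
Hypothesis F_attained : forall y v, exists2 u, adj v u & F y v = w v u + y u.

Lemma iter_le_of_mean_le :
  (forall s, positional_strategy s -> forall v, mean_weight w s v <= eta v) ->
  exists K, forall N v, iter N F (fun _ => 0) v <= N%:R * eta v + K.
Proof.
move=> /(walk_weight_bounded adj_total)[K walk_le]; exists K => N v.
by have [x [<- xN ->]] := iter_walk_weight F_attained N v; exact: walk_le.
Qed.

Lemma iter_ge_of_mean_ge :
  (forall s, positional_strategy s -> forall v, eta v <= mean_weight w s v) ->
  exists K, forall N v, N%:R * eta v - K <= iter N F (fun _ => 0) v.
Proof.
move=> mean_ge.
have [K walk_le] := walk_weight_bounded (w := fun a b => - w a b) (eta := fun v => - eta v)
  adj_total (fun s s_pos v => ltac:(by rewrite mean_weight_opp lerN2 mean_ge)).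
exists K => N v; have [x [<- xN ->]] := iter_walk_weight F_attained N v.
by have := walk_le x N xN; rewrite walk_weight_opp mulrN; lra.
Qed.

End IterBounds.
End Walks.

Section GameOperators.
Variables (R : realType) (X : finType) (max_node : pred X).
Implicit Types (adj : rel X) (w : X -> X -> R) (y : X -> R).

Definition game_operator adj w (F : (X -> R) -> X -> R) := forall y v,
  (if max_node v then forall u, adj v u -> w v u + y u <= F y v
   else forall u, adj v u -> F y v <= w v u + y u) /\
  exists2 u, adj v u & F y v = w v u + y u.

Lemma game_operator_exists adj w : (forall v, exists u, adj v u) ->
  exists F, game_operator adj w F.
Proof.
move=> /fin_all_exists[succ succP].
exists (fun y v => if max_node v
  then let u := Order.arg_max (succ v) (adj v) (fun u => w v u + y u) in w v u + y u
  else let u := Order.arg_min (succ v) (adj v) (fun u => w v u + y u) in w v u + y u).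
move=> y v; case: (max_node v).
- by case: arg_maxP => // u vu u_max; split => //; exists u.
- by case: arg_minP => // u vu u_min; split => //; exists u.
Qed.

Lemma game_operator_eq adj adj' w w' F : adj =2 adj' ->
  (forall v u, adj v u -> w v u = w' v u) ->
  game_operator adj w F -> game_operator adj' w' F.
Proof.
move=> adj_eq w_eq F_game y v; have [F_bound [u vu Fv]] := F_game y v; split.
  by case: (max_node v) F_bound => F_bound u' vu'; rewrite -w_eq ?adj_eq //;
    apply: F_bound; rewrite adj_eq.
by exists u; rewrite -?adj_eq // -w_eq.
Qed.

Lemma game_operator_shift adj w F y y' c : game_operator adj w F ->
  (forall u, y u <= y' u + c) -> forall v, F y v <= F y' v + c.
Proof.
move=> F_game yy' v; have [F_y [u vu Fyv]] := F_game y v.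
have [F_y' [u' vu' Fy'v]] := F_game y' v.
case: (max_node v) F_y F_y' => F_y F_y'.
- by have := F_y' u vu; have := yy' u; rewrite Fyv; lra.
- by have := F_y u' vu'; have := yy' u'; rewrite Fy'v; lra.
Qed.

Lemma game_operator_mono adj w F y y' : game_operator adj w F ->
  (forall u, y u <= y' u) -> forall v, F y v <= F y' v.
Proof.
move=> F_game yy' v; rewrite -[leRHS]addr0.
by apply: (game_operator_shift F_game) => u; rewrite addr0.
Qed.

Lemma iter_game_operator_le adj adj' w F F' :
  game_operator adj w F -> game_operator adj' w F' ->
  (forall v u, max_node v -> adj v u -> adj' v u) ->
  (forall v u, ~~ max_node v -> adj' v u -> adj v u) ->
  forall y N v, iter N F y v <= iter N F' y v.
Proof.
move=> F_game F'_game max_sub min_sub y; elim=> [|N IH] v //=.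
apply: le_trans (game_operator_mono F_game IH v) _.
have [F_y [u vu Fv]] := F_game (iter N F' y) v.
have [F'_y [u' vu' F'v]] := F'_game (iter N F' y) v.
case max_v: (max_node v) F_y F'_y => F_y F'_y.
- by rewrite Fv; apply/F'_y/max_sub.
- by rewrite F'v; apply/F_y/min_sub; rewrite ?max_v.
Qed.

Section DiscountedFixpoint.
Local Open Scope classical_set_scope.
Variables (adj : rel X) (w : X -> X -> R) (F : (X -> R) -> X -> R) (a : R).
Hypotheses (F_game : game_operator adj w F) (a_ge0 : 0 <= a) (a_lt1 : a < 1).

Let T y := F (fun u => a * y u).

Let T_shift y y' c : (forall u, y u <= y' u + c) -> forall v, T y v <= T y' v + a * c.
Proof.
move=> yy' v; apply: (game_operator_shift F_game) => u.
by rewrite -mulrDr ler_wpM2l.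
Qed.

Let T_mono y y' : (forall u, y u <= y' u) -> forall v, T y v <= T y' v.
Proof. by move=> yy'; apply: game_operator_mono F_game _ => u; rewrite ler_wpM2l. Qed.

(* Knaster-Tarski: the infimum of the T-contracted functions in an invariant
   box is a fixed point. *)
Lemma discounted_fixpoint : exists x : X -> R, forall v, x v = F (fun u => a * x u) v.
Proof.
have [C C0 T0_le] := fin_bounded (T (fun _ => 0)).
set c := C / (1 - a); have a1 : 0 < 1 - a by rewrite subr_gt0.
have c0 : 0 <= c := divr_ge0 C0 (ltW a1).
have Cac : C + a * c = c by rewrite /c; field; rewrite gt_eqF.
have T_box y : (forall u, - c <= y u <= c) -> forall v, - c <= T y v <= c.
  move=> y_box v; have := T0_le v; rewrite ler_norml => /andP[T0_ge T0_le'].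
  have hi u : y u <= 0 + c by have /andP[? ?] := y_box u; lra.
  have lo u : 0 <= y u + c by have /andP[? ?] := y_box u; lra.
  have := T_shift (y' := fun _ => 0) hi v; have := T_shift (y := fun _ => 0) lo v.
  by move=> ? ?; apply/andP; split; lra.
pose S := [set y : X -> R | (forall u, - c <= y u <= c) /\ forall u, T y u <= y u].
pose x v := inf [set y v | y in S].
have c_box (u : X) : - c <= c <= c by rewrite lexx andbT; lra.
have S_top : S (fun _ => c) by split=> // u; have /andP[] := T_box _ c_box u.
have x_le y : S y -> forall v, x v <= y v.
  move=> Sy v; apply: ge_inf; last by exists y.
  by exists (- c) => _ [y' [+ _] <-] => /(_ v) /andP[].
have x_box u : - c <= x u <= c.
  rewrite (x_le _ S_top) andbT; apply: lb_le_inf; first by exists c, (fun _ => c).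
  by move=> _ [y' [+ _] <-] => /(_ u) /andP[].
have Tx_le v : T x v <= x v.
  apply: lb_le_inf; first by exists c, (fun _ => c).
  by move=> _ [y Sy <-]; apply: le_trans (T_mono (x_le _ Sy) v) (Sy.2 v).
have S_Tx : S (T x) by split=> u; [exact: T_box | exact: T_mono].
by exists x => v; apply/le_anti; rewrite Tx_le x_le.
Qed.

End DiscountedFixpoint.
End GameOperators.

Section DiscountedMean.
Variables (R : realType) (X : finType).
Implicit Types (s : X -> X) (w : X -> X -> R) (x : X -> R).

Lemma mean_weight_le_discounted w s x (a H : R) : 0 <= a -> a < 1 ->
  (forall v, w v (s v) + a * x (s v) <= x v) -> (forall v, `|bias w s v| <= H) ->
  forall v, mean_weight w s v <= (1 - a) * (x v + 2 * H).
Proof.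
move=> a0 a1 x_super bias_le v.
have r0 : 0 < 1 - a by rewrite subr_gt0.
pose y u := mean_weight w s u / (1 - a) + bias w s u.
have y_step u : y u = w u (s u) + a * y (s u) + (1 - a) * bias w s (s u).
  by rewrite /y mean_weight_step edge_weight_mean_bias; field; rewrite gt_eqF.
have [v0 _ v0_max] := arg_maxP (fun u => y u - x u) (isT : predT v).
(* At its maximum D, the excess y - x satisfies D <= a D + (1 - a) H. *)
have D_le : y v0 - x v0 <= H.
  have := bias_le (s v0); rewrite ler_norml => /andP[_ bias_s].
  have : (1 - a) * bias w s (s v0) <= (1 - a) * H := ler_wpM2l (ltW r0) bias_s.
  have : a * (y (s v0) - x (s v0)) <= a * (y v0 - x v0) := ler_wpM2l a0 (v0_max _ isT).
  have := x_super v0; have := y_step v0 => ? ? ? ?.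
  by rewrite -(ler_pM2l r0); lra.
have bound : mean_weight w s v / (1 - a) <= x v + 2 * H.
  have yv : y v = mean_weight w s v / (1 - a) + bias w s v by [].
  have vmax : y v - x v <= y v0 - x v0 := v0_max v isT.
  by have := bias_le v; rewrite ler_norml => /andP[? _]; lra.
have -> : mean_weight w s v = (1 - a) * (mean_weight w s v / (1 - a)).
  by field; rewrite gt_eqF.
by rewrite ler_pM2l.
Qed.

Lemma mean_weight_ge_discounted w s x (a H : R) : 0 <= a -> a < 1 ->
  (forall v, x v <= w v (s v) + a * x (s v)) -> (forall v, `|bias w s v| <= H) ->
  forall v, (1 - a) * (x v - 2 * H) <= mean_weight w s v.
Proof.
move=> a0 a1 x_sub bias_le v.
have x_opp_super u : - w u (s u) + a * - x (s u) <= - x u by have := x_sub u; lra.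
have bias_opp_le u : `|bias (fun a b => - w a b) s u| <= H by rewrite bias_opp normrN.
have := @mean_weight_le_discounted (fun a b => - w a b) s (fun u => - x u) a H
  a0 a1 x_opp_super bias_opp_le v.
by rewrite mean_weight_opp; lra.
Qed.

End DiscountedMean.

Section PositionalSaddle.
Variables (R : realType) (X : finType) (max_node : pred X) (adj : rel X).
Variables (w : X -> X -> R) (H : R).
Hypothesis adj_total : forall v, exists u, adj v u.
Hypothesis bias_le : forall (s : X -> X) v, `|bias w s v| <= H.
Hypothesis H_ge0 : 0 <= H.
Implicit Types (s t : {ffun X -> X}).

Definition max_deviation (t s : X -> X) := [forall v, ~~ max_node v ==> (s v == t v)].
Definition min_deviation (t s : X -> X) := [forall v, max_node v ==> (s v == t v)].

Definition saddle_gap t : R := Num.max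
  (\big[Num.max/0]_(s : {ffun X -> X} | positional_strategy adj s && max_deviation t s)
     \big[Num.max/0]_v (mean_weight w s v - mean_weight w t v))
  (\big[Num.max/0]_(s : {ffun X -> X} | positional_strategy adj s && min_deviation t s)
     \big[Num.max/0]_v (mean_weight w t v - mean_weight w s v)).

Lemma saddle_gap_ge0 t : 0 <= saddle_gap t.
Proof. by rewrite le_max bigmax_ge_id. Qed.

Lemma discounted_saddle_gap (a : R) : 0 <= a -> a < 1 ->
  exists2 t : {ffun X -> X}, positional_strategy adj t & saddle_gap t <= 4 * (1 - a) * H.
Proof.
move=> a0 a1; have [F F_game] := game_operator_exists max_node w adj_total.
have [x x_fix] := discounted_fixpoint F_game a0 a1.
have /fin_all_exists[t0 t0P] v : exists u, adj v u && (x v == w v u + a * x u).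
  by have [_ [u vu Fv]] := F_game (fun u => a * x u) v; exists u; rewrite vu x_fix Fv eqxx.
pose t := [ffun v => t0 v].
have t_step v : adj v (t v) /\ x v = w v (t v) + a * x (t v).
  by rewrite ffunE; have /andP[-> /eqP] := t0P v.
have up s : positional_strategy adj s -> max_deviation t s ->
    forall v, mean_weight w s v <= (1 - a) * (x v + 2 * H).
  move=> /forallP s_pos /forallP s_dev; apply: mean_weight_le_discounted => // v.
  have [F_le _] := F_game (fun u => a * x u) v; rewrite [leRHS]x_fix.
  case: (boolP (max_node v)) F_le => [_|min_v _]; first exact.
  by have /implyP/(_ min_v)/eqP -> := s_dev v; rewrite -x_fix; have [_ <-] := t_step v.
have lo s : positional_strategy adj s -> min_deviation t s ->
    forall v, (1 - a) * (x v - 2 * H) <= mean_weight w s v.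
  move=> /forallP s_pos /forallP s_dev; apply: mean_weight_ge_discounted => // v.
  have [F_le _] := F_game (fun u => a * x u) v; rewrite [leLHS]x_fix.
  case: (boolP (max_node v)) F_le => [max_v _|_]; last exact.
  by have /implyP/(_ max_v)/eqP -> := s_dev v; rewrite -x_fix; have [_ <-] := t_step v.
have t_pos : positional_strategy adj t by apply/forallP => v; have [] := t_step v.
have t_dev : max_deviation t t && min_deviation t t.
  by apply/andP; split; apply/forallP => v; rewrite eqxx implybT.
have [t_max t_min] := andP t_dev.
have gap0 : 0 <= 4 * (1 - a) * H.
  by rewrite !mulr_ge0 // subr_ge0 ltW.
exists t => //; rewrite ge_max; apply/andP; split.
  apply: bigmax_le => // s /andP[s_pos s_dev]; apply: bigmax_le => // v _.
  by have := up s s_pos s_dev v; have := lo t t_pos t_min v; lra.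
apply: bigmax_le => // s /andP[s_pos s_dev]; apply: bigmax_le => // v _.
by have := lo s s_pos s_dev v; have := up t t_pos t_max v; lra.
Qed.

Lemma exists_saddle : exists2 t : {ffun X -> X}, positional_strategy adj t &
  (forall s : X -> X, positional_strategy adj s -> (forall v, ~~ max_node v -> s v = t v) ->
     forall v, mean_weight w s v <= mean_weight w t v) /\
  (forall s : X -> X, positional_strategy adj s -> (forall v, max_node v -> s v = t v) ->
     forall v, mean_weight w t v <= mean_weight w s v).
Proof.
have [t0 t0_pos _] := discounted_saddle_gap (lexx 0) ltr01.
have [t t_pos t_opt] : exists2 t : {ffun X -> X}, positional_strategy adj t &
    forall s, positional_strategy adj s -> saddle_gap t <= saddle_gap s.
  by case: (@arg_minP _ _ _ t0 (positional_strategy adj) saddle_gap t0_pos) => t; exists t.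
(* Vanishing discount: the gap of t is at most 4 H / k for every k >= 2. *)
have gap_le0 : saddle_gap t <= 0.
  apply: (@natmul_bounded_le0 _ _ (4 * H)) => M; set k : R := M.+2%:R.
  have k_gt0 : 0 < k by rewrite ltr0n.
  have a0 : 0 <= 1 - k^-1 by rewrite subr_ge0 invf_le1 // ler1n.
  have a1 : 1 - k^-1 < 1 by rewrite ltrBlDr ltrDl invr_gt0.
  have [ta ta_pos gap_ta] := discounted_saddle_gap a0 a1.
  have gap_t := le_trans (t_opt _ ta_pos) gap_ta; rewrite subKr in gap_t.
  have gap_ge0 := saddle_gap_ge0 t.
  have : k * saddle_gap t <= 4 * H.
    by rewrite -ler_pdivlMl // mulrC (le_trans gap_t) // mulrAC.
  apply: le_trans; rewrite ler_wpM2r // ler_nat; exact: leqW (leqnSn M).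
move: gap_le0; rewrite ge_max => /andP[gap_max gap_min].
exists t => //; split=> s s_pos s_dev v; pose s' := [ffun u => s u];
  have s'E : (s' : X -> X) = s by apply/funext => u; rewrite ffunE.
- have dev : max_deviation t s by apply/forallP => u; apply/implyP => /s_dev ->.
  move/bigmax_leP: gap_max => [_ /(_ s')]; rewrite s'E s_pos dev.
  by move=> /(_ isT)/bigmax_leP[_ /(_ v isT)]; lra.
- have dev : min_deviation t s by apply/forallP => u; apply/implyP => /s_dev ->.
  move/bigmax_leP: gap_min => [_ /(_ s')]; rewrite s'E s_pos dev.
  by move=> /(_ isT)/bigmax_leP[_ /(_ v isT)]; lra.
Qed.

End PositionalSaddle.

Section MeanPayoffGame.
Variables (R : realType) (X : finType) (max_node : pred X) (adj : rel X).
Variable (w : X -> X -> R).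
Hypothesis adj_total : forall v, exists u, adj v u.
Implicit Types (s t : X -> X).

Definition restrict_min t : rel X := fun v u => if max_node v then adj v u else u == t v.

Definition restrict_max t : rel X := fun v u => if max_node v then u == t v else adj v u.

Lemma positional_restrict_min t s : positional_strategy adj t ->
  positional_strategy (restrict_min t) s ->
  positional_strategy adj s /\ forall v, ~~ max_node v -> s v = t v.
Proof.
move=> /forallP t_pos /forallP s_pos; split=> [|v]; last first.
  by move: (s_pos v); rewrite /restrict_min => /[swap] /negbTE -> /eqP.
apply/forallP => v; move: (s_pos v); rewrite /restrict_min.
by case: (max_node v) => // /eqP ->.
Qed.

Lemma positional_restrict_max t s : positional_strategy adj t ->
  positional_strategy (restrict_max t) s ->
  positional_strategy adj s /\ forall v, max_node v -> s v = t v.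
Proof.
move=> /forallP t_pos /forallP s_pos; split=> [|v]; last first.
  by move: (s_pos v); rewrite /restrict_max => /[swap] -> /eqP.
apply/forallP => v; move: (s_pos v); rewrite /restrict_max.
by case: (max_node v) => // /eqP ->.
Qed.

Lemma restrict_min_total t v : exists u, restrict_min t v u.
Proof.
rewrite /restrict_min.
by case: (max_node v); [exact: adj_total | exists (t v)].
Qed.

Lemma restrict_max_total t v : exists u, restrict_max t v u.
Proof.
rewrite /restrict_max.
by case: (max_node v); [exists (t v) | exact: adj_total].
Qed.

Theorem mean_payoff_value : exists (t : {ffun X -> X}) (eta : X -> R),
  [/\ positional_strategy adj t,
   forall F, game_operator max_node (restrict_min t) w F ->
     exists K, forall N v, iter N F (fun _ => 0) v <= N%:R * eta v + K,
   forall F, game_operator max_node (restrict_max t) w F ->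
     exists K, forall N v, N%:R * eta v - K <= iter N F (fun _ => 0) v &
   forall F, game_operator max_node adj w F ->
     exists K, forall N v, `|iter N F (fun _ => 0) v - N%:R * eta v| <= K].
Proof.
have [H H0 H_le] := fin_bounded (fun sv : {ffun X -> X} * X => bias w sv.1 sv.2).
have bias_le s v : `|bias w s v| <= H.
  have -> : s = [ffun u => s u] by apply/funext => u; rewrite ffunE.
  exact: (H_le ([ffun u => s u], v)).
have [t t_pos [t_max t_min]] := exists_saddle max_node adj_total bias_le H0.
exists t, (mean_weight w t).
have upper F : game_operator max_node (restrict_min t) w F ->
    exists K, forall N v, iter N F (fun _ => 0) v <= N%:R * mean_weight w t v + K.
  move=> F_game; have F_att y v := (F_game y v).2.
  apply: (iter_le_of_mean_le (restrict_min_total t) F_att) => s s_pos.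
  by have [] := positional_restrict_min t_pos s_pos; exact: t_max.
have lower F : game_operator max_node (restrict_max t) w F ->
    exists K, forall N v, N%:R * mean_weight w t v - K <= iter N F (fun _ => 0) v.
  move=> F_game; have F_att y v := (F_game y v).2.
  apply: (iter_ge_of_mean_ge (restrict_max_total t) F_att) => s s_pos.
  by have [] := positional_restrict_max t_pos s_pos; exact: t_min.
split=> // F F_game.
have [Fmin Fmin_game] := game_operator_exists max_node w (restrict_min_total t).
have [Fmax Fmax_game] := game_operator_exists max_node w (restrict_max_total t).
have [K1 K1_le] := upper _ Fmin_game; have [K2 K2_le] := lower _ Fmax_game.
exists (Num.max K1 K2) => N v.
move/forallP: t_pos => t_pos.
have F_le_Fmin : iter N F (fun _ => 0) v <= iter N Fmin (fun _ => 0) v.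
  apply: (iter_game_operator_le F_game Fmin_game) => u u'; rewrite /restrict_min.
    by move=> ->.
  by move=> /negbTE -> /eqP ->.
have Fmax_le_F : iter N Fmax (fun _ => 0) v <= iter N F (fun _ => 0) v.
  apply: (iter_game_operator_le Fmax_game F_game) => u u'; rewrite /restrict_max.
    by move=> -> /eqP ->.
  by move=> /negbTE ->.
have K1_max : K1 <= Num.max K1 K2 by rewrite le_max lexx.
have K2_max : K2 <= Num.max K1 K2 by rewrite le_max lexx orbT.
have := K1_le N v; have := K2_le N v; rewrite ler_norml; lra.
Qed.

End MeanPayoffGame.

Section MinMaxGame.
Variables (R : realType) (I J : finType).
Implicit Types (A B : I -> J -> \bar R) (y : J + I -> R).

Definition row_node (v : J + I) : bool := if v is inr _ then true else false.

(* Column j is a Min node with moves j -> i of weight -a_ij; row i is a Max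
   node with moves i -> l of weight b_il. *)
Definition minmax_graph A B : rel (J + I) := fun v u =>
  match v, u with
  | inl j, inr i => (A i j != -oo)%E
  | inr i, inl l => (B i l != -oo)%E
  | _, _ => false
  end.

Definition minmax_weight A B (v u : J + I) : R :=
  match v, u with
  | inl j, inr i => - fine (A i j)
  | inr i, inl l => fine (B i l)
  | _, _ => 0
  end.

Definition shapley A B y (v : J + I) : R :=
  match v with
  | inl j => fine (\big[mine/+oo]_(i | A i j != -oo) (- A i j + (y (inr i))%:E))%E
  | inr i => fine (\big[maxe/-oo]_(l | B i l != -oo) (B i l + (y (inl l))%:E))%E
  end.

Definition minmax_standing A B := [/\ forall i j, (A i j != +oo)%E,
  forall i l, (B i l != +oo)%E, forall j, exists i, (A i j != -oo)%E &
  forall i, exists l, (B i l != -oo)%E].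

Lemma minmax_graph_total A B : minmax_standing A B ->
  forall v, exists u, minmax_graph A B v u.
Proof.
case=> _ _ A_col B_row [j|i]; first by have [i ?] := A_col j; exists (inr i).
by have [l ?] := B_row i; exists (inl l).
Qed.

Section Standing.
Variables (A B : I -> J -> \bar R).
Hypothesis AB_standing : minmax_standing A B.

Lemma shapley_colE y j :
  (\big[mine/+oo]_(i | A i j != -oo) (- A i j + (y (inr i))%:E) =
   \big[mine/+oo]_(i | A i j != -oo) (- fine (A i j) + y (inr i))%:E)%E.
Proof.
case: AB_standing => A_fin _ _ _; apply: eq_bigr => i.
by move: (A_fin i j); case: (A i j).
Qed.

Lemma shapley_rowE y i :
  (\big[maxe/-oo]_(l | B i l != -oo) (B i l + (y (inl l))%:E) =
   \big[maxe/-oo]_(l | B i l != -oo) (fine (B i l) + y (inl l))%:E)%E.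
Proof.
case: AB_standing => _ B_fin _ _; apply: eq_bigr => l.
by move: (B_fin i l); case: (B i l).
Qed.

Lemma shapley_game :
  game_operator row_node (minmax_graph A B) (minmax_weight A B) (shapley A B).
Proof.
case: AB_standing => _ _ A_col B_row y [j|i] /=.
- rewrite shapley_colE; have [i0 Ai0] := A_col j.
  pose f i := - fine (A i j) + y (inr i).
  have [i Ai min_i] := bigmine_attained (P := fun i => A i j != -oo%E) f Ai0.
  rewrite min_i; split=> [[//|i'] Ai'|]; last by exists (inr i).
  have := @bigmin_le_cond _ _ _ +oo%E i' (fun i => A i j != -oo%E) (fun i => (f i)%:E) Ai'.
  by rewrite min_i lee_fin.
- rewrite shapley_rowE; have [l0 Bl0] := B_row i.
  pose f l := fine (B i l) + y (inl l).
  have [l Bl max_l] := bigmaxe_attained (P := fun l => B i l != -oo%E) f Bl0.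
  rewrite max_l; split=> [[l' Bl'|//]|]; last by exists (inl l).
  have := @le_bigmax_cond _ _ _ -oo%E l' (fun l => B i l != -oo%E) (fun l => (f l)%:E) Bl'.
  by rewrite max_l lee_fin.
Qed.

Lemma shapley2_minmax y j :
  shapley A B (shapley A B y) (inl j) = minmax A B (fun l => y (inl l)) j.
Proof.
rewrite /minmax /=; congr fine; apply: eq_bigr => i _; congr (_ + _)%E.
case: AB_standing => _ _ _ B_row; rewrite shapley_rowE; have [l0 Bl0] := B_row i.
by have [l _ ->] := bigmaxe_attained (P := fun l => B i l != -oo%E)
  (fun l => fine (B i l) + y (inl l)) Bl0.
Qed.

Lemma mm_orbit_shapley N j :
  mm_orbit A B N j = iter N.*2 (shapley A B) (fun _ => 0) (inl j).
Proof.
elim: N j => [|N IH] j //; rewrite doubleS !iterS shapley2_minmax /mm_orbit iterS.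
by congr (minmax A B _ j); apply/funext => l; exact: IH.
Qed.

Lemma cycle_time_shapley (eta : J + I -> R) K :
  (forall N v, `|iter N (shapley A B) (fun _ => 0) v - N%:R * eta v| <= K) ->
  forall j, cycle_time A B j = 2 * eta (inl j).
Proof.
move=> eta_lin j; apply: (limn_div_linear (K := K)) => N.
by rewrite mm_orbit_shapley mulrA -natrM muln2; exact: eta_lin.
Qed.

Lemma shapley_value : exists (eta : J + I -> R) K,
  forall N v, `|iter N (shapley A B) (fun _ => 0) v - N%:R * eta v| <= K.
Proof.
have [t [eta [_ _ _ value]]] :=
  mean_payoff_value row_node (minmax_weight A B) (minmax_graph_total AB_standing).
by have [K ?] := value _ shapley_game; exists eta, K.
Qed.

Lemma cycle_time_ge (e : J + I -> R) K :
  (forall N v, N%:R * e v - K <= iter N (shapley A B) (fun _ => 0) v) ->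
  forall j, 2 * e (inl j) <= cycle_time A B j.
Proof.
move=> iter_ge j; have [eta [K' eta_lin]] := shapley_value.
rewrite (cycle_time_shapley eta_lin) ler_pM2l //.
apply: (slope_le (K2 := K') (iter_ge ^~ (inl j))) => N.
by have := eta_lin N (inl j); rewrite ler_norml => /andP[_]; lra.
Qed.

Lemma cycle_time_le (e : J + I -> R) K :
  (forall N v, iter N (shapley A B) (fun _ => 0) v <= N%:R * e v + K) ->
  forall j, cycle_time A B j <= 2 * e (inl j).
Proof.
move=> iter_le j; have [eta [K' eta_lin]] := shapley_value.
rewrite (cycle_time_shapley eta_lin) ler_pM2l //.
apply: (slope_le (K1 := K') _ (iter_le ^~ (inl j))) => N.
by have := eta_lin N (inl j); rewrite ler_norml => /andP[+ _]; lra.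
Qed.

End Standing.

Lemma minmax_standing_restr_min A B tau : minmax_standing A B ->
  is_min_strategy A tau -> minmax_standing (restr_min A tau) B.
Proof.
case=> A_fin B_fin _ B_row /forallP tau_A; split=> // [i j|j]; rewrite /restr_min.
  by case: ifP.
by exists (tau j); rewrite eqxx.
Qed.

Lemma minmax_standing_restr_max A B sigma : minmax_standing A B ->
  is_max_strategy B sigma -> minmax_standing A (restr_max B sigma).
Proof.
case=> A_fin B_fin A_col _ /forallP sigma_B; split=> // [i l|i]; rewrite /restr_max.
  by case: ifP.
by exists (sigma i); rewrite eqxx.
Qed.

Lemma shapley_restr_min_game A B tau : minmax_standing A B -> is_min_strategy A tau ->
  game_operator row_node (minmax_graph (restr_min A tau) B) (minmax_weight A B)
    (shapley (restr_min A tau) B).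
Proof.
move=> AB tau_A.
apply: game_operator_eq (shapley_game (minmax_standing_restr_min AB tau_A)) => //.
by move=> [j|i] [l|i'] //=; rewrite /restr_min; case: ifP => //; rewrite eqxx.
Qed.

Lemma shapley_restr_max_game A B sigma : minmax_standing A B -> is_max_strategy B sigma ->
  game_operator row_node (minmax_graph A (restr_max B sigma)) (minmax_weight A B)
    (shapley A (restr_max B sigma)).
Proof.
move=> AB sigma_B.
apply: game_operator_eq (shapley_game (minmax_standing_restr_max AB sigma_B)) => //.
by move=> [j|i] [l|i'] //=; rewrite /restr_max; case: ifP => //; rewrite eqxx.
Qed.

Lemma cycle_time_restr_min A B tau : minmax_standing A B -> is_min_strategy A tau ->
  forall j, cycle_time A B j <= cycle_time (restr_min A tau) B j.
Proof.
move=> AB tau_A j; have [eta [K eta_lin]] := shapley_value AB.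
rewrite (cycle_time_shapley AB eta_lin).
apply: (cycle_time_ge (minmax_standing_restr_min AB tau_A) (K := K)) => N v.
have : iter N (shapley A B) (fun _ => 0) v <=
       iter N (shapley (restr_min A tau) B) (fun _ => 0) v.
  apply: (iter_game_operator_le (shapley_game AB) (shapley_restr_min_game AB tau_A)).
    by move=> [j'|i] [l|i'].
  by move=> [j'|i] [l|i'] //= _; rewrite /restr_min; case: ifP => //; rewrite eqxx.
by have := eta_lin N v; rewrite ler_norml => /andP[+ _]; lra.
Qed.

Lemma cycle_time_restr_max A B sigma : minmax_standing A B -> is_max_strategy B sigma ->
  forall j, cycle_time A (restr_max B sigma) j <= cycle_time A B j.
Proof.
move=> AB sigma_B j; have [eta [K eta_lin]] := shapley_value AB.
rewrite (cycle_time_shapley AB eta_lin).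
apply: (cycle_time_le (minmax_standing_restr_max AB sigma_B) (K := K)) => N v.
have : iter N (shapley A (restr_max B sigma)) (fun _ => 0) v <=
       iter N (shapley A B) (fun _ => 0) v.
  apply: (iter_game_operator_le (shapley_restr_max_game AB sigma_B) (shapley_game AB)).
    by move=> [j'|i] [l|i'] //= _; rewrite /restr_max; case: ifP => //; rewrite eqxx.
  by move=> [j'|i] [l|i'].
by have := eta_lin N v; rewrite ler_norml => /andP[_]; lra.
Qed.

Lemma minmax_graph_restr_min A B t tau : is_min_strategy A tau ->
  (forall j, t (inl j) = inr (tau j)) ->
  minmax_graph (restr_min A tau) B =2 restrict_min row_node (minmax_graph A B) t.
Proof.
move=> /forallP tau_A tauE [j|i] [l|i'] //=; rewrite /restrict_min /= tauE //.
rewrite /restr_min -[inr i' == _]/(i' == tau j).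
by have [->|_] := eqVneq i' (tau j); rewrite ?tau_A ?eqxx.
Qed.

Lemma minmax_graph_restr_max A B t sigma : is_max_strategy B sigma ->
  (forall i, t (inr i) = inl (sigma i)) ->
  minmax_graph A (restr_max B sigma) =2 restrict_max row_node (minmax_graph A B) t.
Proof.
move=> /forallP sigma_B sigmaE [j|i] [l|i'] //=; rewrite /restrict_max /= sigmaE //.
rewrite /restr_max -[inl l == _]/(l == sigma i).
by have [->|_] := eqVneq l (sigma i); rewrite ?sigma_B ?eqxx.
Qed.

Lemma optimal_strategies A B : minmax_standing A B -> exists tau sigma,
  [/\ is_min_strategy A tau, is_max_strategy B sigma,
   forall j, cycle_time (restr_min A tau) B j <= cycle_time A B j &
   forall j, cycle_time A B j <= cycle_time A (restr_max B sigma) j].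
Proof.
move=> AB; have [t [eta [t_pos upper lower value]]] :=
  mean_payoff_value row_node (minmax_weight A B) (minmax_graph_total AB).
have [K eta_lin] := value _ (shapley_game AB); move/forallP: t_pos => t_pos.
have /fin_all_exists[tau0 tau0E] j : exists i, t (inl j) = inr i.
  by move: (t_pos (inl j)); case: (t (inl j)) => // i _; exists i.
have /fin_all_exists[sigma0 sigma0E] i : exists l, t (inr i) = inl l.
  by move: (t_pos (inr i)); case: (t (inr i)) => // l _; exists l.
pose tau := [ffun j => tau0 j]; pose sigma := [ffun i => sigma0 i].
have tauE j : t (inl j) = inr (tau j) by rewrite ffunE.
have sigmaE i : t (inr i) = inl (sigma i) by rewrite ffunE.
have tau_A : is_min_strategy A tau.
  by apply/forallP => j; have := t_pos (inl j); rewrite tauE.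
have sigma_B : is_max_strategy B sigma.
  by apply/forallP => i; have := t_pos (inr i); rewrite sigmaE.
exists tau, sigma; split=> // j; rewrite (cycle_time_shapley AB eta_lin).
- have [K' iter_le] := upper _ (game_operator_eq (minmax_graph_restr_min B tau_A tauE)
    (fun _ _ _ => erefl) (shapley_restr_min_game AB tau_A)).
  exact: (cycle_time_le (minmax_standing_restr_min AB tau_A) iter_le).
- have [K' iter_ge] := lower _ (game_operator_eq (minmax_graph_restr_max A sigma_B sigmaE)
    (fun _ _ _ => erefl) (shapley_restr_max_game AB sigma_B)).
  exact: (cycle_time_ge (minmax_standing_restr_max AB sigma_B) iter_ge).
Qed.

Lemma Phi_le A B A' B' : (forall j, cycle_time A B j <= cycle_time A' B' j) ->
  (Phi A B <= Phi A' B')%E.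
Proof. by move=> ct_le; apply: le_bigmin2 => j _; rewrite lee_fin. Qed.

Theorem minmax_strategy_values A B : minmax_standing A B ->
  (\big[mine/+oo]_(tau : {ffun J -> I} | is_min_strategy A tau) Phi (restr_min A tau) B
     = Phi A B /\
   Phi A B = \big[maxe/-oo]_(sigma : {ffun I -> J} | is_max_strategy B sigma)
     Phi A (restr_max B sigma))%E.
Proof.
move=> AB; have [tau [sigma [tau_A sigma_B tau_le sigma_ge]]] := optimal_strategies AB.
split; apply/le_anti/andP; split.
- by apply: le_trans (Phi_le tau_le); apply: bigmin_le_cond.
- apply: le_bigmin => [|tau' tau'_A]; first exact: leey.
  exact/Phi_le/cycle_time_restr_min.
- by apply: le_trans (Phi_le sigma_ge) _; apply: le_bigmax_cond.
- apply: bigmax_le => [|sigma' sigma'_B]; first exact: leNye.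
  exact/Phi_le/cycle_time_restr_max.
Qed.

End MinMaxGame.

Local Open Scope ereal_scope.

Theorem proposition5 (R : realType) (m n : nat)
  (U V : 'I_m -> 'I_n -> \bar R) (b d : 'I_m -> \bar R)
  (p : 'I_n -> \bar R) (q : 'I_n -> \bar R)
  (hU : forall i j, U i j != +oo) (hV : forall i j, V i j != +oo)
  (hb : forall i, b i != +oo) (hd : forall i, d i != +oo)
  (hp : forall j, p j != +oo) (hq : forall j, q j != -oo)
  (hA : forall j, exists i, Amat U b p q i j != -oo)
  (hB : forall (lam : R) i, exists j, Bmat V d lam i j != -oo)
  (lam : R) :
  \big[mine/+oo]_(t : {ffun ('I_n + unit)%type -> ('I_m + 'I_n + unit)%type}
                   | is_min_strategy (Amat U b p q) t)
     Phi (restr_min (Amat U b p q) t) (Bmat V d lam)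
  = Phi (Amat U b p q) (Bmat V d lam)
  /\
  Phi (Amat U b p q) (Bmat V d lam)
  = \big[maxe/-oo]_(s : {ffun ('I_m + 'I_n + unit)%type -> ('I_n + unit)%type}
                   | is_max_strategy (Bmat V d lam) s)
     Phi (Amat U b p q) (restr_max (Bmat V d lam) s).
Proof.
apply: minmax_strategy_values; split=> //.
- by move=> [[i|i]|[]] [j|[]] //=; case: (q j) (hq j).
- by move=> [[i|i]|[]] [j|[]] //=; case: ifP.
Qed.
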